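(* Let $n,m,\ell$ be positive integers with $m\le n-1$ and $\ell\le n-1$. Then $$\sum_{j=0}^{n-m-1}\binom{m-\ell+2j}{j}\,\mathcal Y_n\big(2^{\{n-m-j-1\}},1^{\{m-\ell+2j\}}\big)=\frac{1}{n^2}\binom{n}{m}\binom{n}{\ell}.$$
   Context: Let $\zeta_n=e^{2\pi\sqrt{-1}/n}$. For positive integers $s_1,\dots,s_m$, define $\mathfrak Z_n(s_1,\dots,s_m):=\sum_{1\le i_1<\cdots<i_m\le n-1}\prod_{k=1}^{m}(1-\zeta_n^{i_k})^{-s_k}$ (equal to $1$ if $m=0$ and to $0$ if $m>n-1$). Define $\mathcal Y_n(s_1,\dots,s_m):=\sum_{\sigma}\mathfrak Z_n(\sigma)$, where $\sigma$ runs over all distinct rearrangements of $(s_1,\dots,s_m)$; $\mathcal Y_n$ of the empty sequence is $1$. Notation: $a^{\{k\}}$ denotes the block $a,\dots,a$ of length $k$; any $\mathcal Y_n$ term in which some block has negative length is interpreted as $0$. Binomial coefficients $\binom{a}{b}$ are $0$ when $b<0$ or $b>a\ge0$. *)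

From HB Require Import structures.
From mathcomp Require Import all_boot all_order all_algebra.
From mathcomp Require Import complex.
From mathcomp Require Import reals trigo.
Set Implicit Arguments. Unset Strict Implicit. Unset Printing Implicit Defensive.
Import Order.TTheory GRing.Theory Num.Theory.
Local Open Scope ring_scope.
Local Open Scope complex_scope.

Definition zeta (R : realType) (n : nat) : R[i] :=
  ((cos (2 * pi / n%:R))%:C + 'i * (sin (2 * pi / n%:R))%:C)%C.

(* Zrec n lo s = sum over lo <= i_1 < ... < i_m <= n-1 of prod_k (1 - zeta^i_k)^(-s_k) *)
Fixpoint Zrec (R : realType) (n lo : nat) (s : seq nat) : R[i] :=
  match s with
  | [::] => 1
  | a :: s' => \sum_(lo <= i < n) (1 - zeta R n ^+ i) ^- a * Zrec R n i.+1 s'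
  end.

Definition Zfrak (R : realType) (n : nat) (s : seq nat) : R[i] := Zrec R n 1 s.

(* \mathcal Y_n(s): sum over all distinct rearrangements of s
   (seq.permutations s is the duplicate-free list of all permutations of s). *)
Definition Ycal (R : realType) (n : nat) (s : seq nat) : R[i] :=
  \sum_(t <- permutations s) Zfrak R n t.

From HB Require Import structures.
From mathcomp Require Import all_boot all_order all_algebra.
From mathcomp Require Import complex.
From mathcomp Require Import reals trigo.
From mathcomp Require Import ring lra zify.
Import Order.TTheory GRing.Theory Num.Theory.
Local Open Scope ring_scope.

(* Put x_i = 1 / (1 - zeta^i) for 1 <= i <= n - 1.  The left-hand side is
   sum_c C(r + s - 2c, r - c) m_(2^c 1^(r+s-2c))(x) with r = n - m - 1 and
   s = n - l - 1, and this is the expansion of e_r(x) e_s(x) in monomial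
   symmetric functions: a monomial with c squared and b = r + s - 2c simple
   variables arises once for each choice of the r - c simple variables taken
   from e_r.  Moreover prod_i (1 + x_i X) = prod_i (X + 1 - zeta^i) / prod_i
   (1 - zeta^i) = (sum_(k < n) (X + 1)^k) / n, because prod_(i >= 1)
   (X - zeta^i) = (X^n - 1) / (X - 1); hence e_r(x) = C(n, r + 1) / n. *)

Set Implicit Arguments.
Unset Strict Implicit.
Unset Printing Implicit Defensive.

Section QuasiSymmetric.
Variables (F : comNzRingType) (x : nat -> F) (hi : nat).

Fixpoint mqsym (lo : nat) (s : seq nat) : F :=
  if s is a :: s' then \sum_(lo <= i < hi) x i ^+ a * mqsym i.+1 s' else 1.

Definition esym lo r := mqsym lo (nseq r 1%N).

Definition msym lo c b :=
  \sum_(t <- permutations (nseq c 2%N ++ nseq b 1%N)) mqsym lo t.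

Lemma down_ind (P : nat -> Prop) :
    (forall lo, (hi <= lo)%N -> P lo) ->
    (forall lo, (lo < hi)%N -> P lo.+1 -> P lo) ->
  forall lo, P lo.
Proof.
move=> Phi Pstep lo; move Dk: (hi - lo)%N => k.
elim: k lo Dk => [|k IHk] lo Dk; first by apply: Phi; lia.
by apply: Pstep; [lia | apply: IHk; lia].
Qed.

Lemma mqsym_step lo s : (lo < hi)%N ->
  mqsym lo s =
    mqsym lo.+1 s + (if s is a :: s' then x lo ^+ a * mqsym lo.+1 s' else 0).
Proof. by case: s => [|a s] lo_lt /=; rewrite ?addr0 // big_ltn // addrC. Qed.

Lemma mqsym_cons_hi lo a s : (hi <= lo)%N -> mqsym lo (a :: s) = 0.
Proof. by move=> hi_le; rewrite /= big_geq. Qed.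

Lemma esymS lo r : (lo < hi)%N ->
  esym lo r.+1 = esym lo.+1 r.+1 + x lo * esym lo.+1 r.
Proof. by move=> lo_lt; rewrite /esym mqsym_step //= expr1. Qed.

Lemma esym_hi lo r : (hi <= lo)%N -> esym lo r = (r == 0%N)%:R.
Proof. by case: r => [|r] hi_le //; rewrite /esym mqsym_cons_hi. Qed.

Lemma msym00 lo : msym lo 0 0 = 1.
Proof. by rewrite /msym /= big_seq1. Qed.

Lemma rem1_nseq21 c b :
  rem 1%N (nseq c 2%N ++ nseq b.+1 1%N) = nseq c 2%N ++ nseq b 1%N.
Proof. by elim: c => //= c ->. Qed.

Lemma big_permutations_nseq21 (G : seq nat -> F) c b : (0 < c + b)%N ->
  \sum_(t <- permutations (nseq c 2%N ++ nseq b 1%N)) G t =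
    (if c is c'.+1 then
       \sum_(t <- permutations (nseq c' 2%N ++ nseq b 1%N)) G (2%N :: t) else 0)
  + (if b is b'.+1 then
       \sum_(t <- permutations (nseq c 2%N ++ nseq b' 1%N)) G (1%N :: t) else 0).
Proof.
set s := nseq c 2%N ++ nseq b 1%N => cb_gt0.
have s21 : perm_eq (undup s) [seq a <- [:: 2%N; 1%N] | a \in s].
  apply: uniq_perm; rewrite ?undup_uniq ?filter_uniq // => a.
  rewrite mem_undup mem_filter andb_idr // => /[!mem_cat] /orP[] /nseqP[-> _];
    by rewrite !inE.
have s_gt0 : (0 < size s)%N by rewrite size_cat !size_nseq.
rewrite (perm_big _ (permutationsE s_gt0)).
rewrite big_allpairs_dep (perm_big _ s21) big_filter !big_cons big_nil.
rewrite /s !mem_cat !mem_nseq /= !andbT !andbF !orbF.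
case: b {cb_gt0 s21 s_gt0 s} => [|b]; rewrite ?rem1_nseq21;
  by case: c => [|c] //=; rewrite ?addr0 ?add0r.
Qed.

Lemma msym_step lo c b : (lo < hi)%N ->
  msym lo c b = msym lo.+1 c b
    + (if c is c'.+1 then x lo ^+ 2 * msym lo.+1 c' b else 0)
    + (if b is b'.+1 then x lo * msym lo.+1 c b' else 0).
Proof.
move=> lo_lt; have [cb0 | cb_gt0] := posnP (c + b).
  have [-> ->] : c = 0%N /\ b = 0%N by lia.
  by rewrite !msym00 !addr0.
rewrite /msym (eq_bigr _ (fun t _ => mqsym_step t lo_lt)) big_split /= -addrA.
congr (_ + _); rewrite big_permutations_nseq21 //.
by case: c {cb_gt0} => [|c]; case: b => [|b]; rewrite -?mulr_sumr ?expr1.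
Qed.

Lemma msym_hi lo c b : (hi <= lo)%N -> (0 < c + b)%N -> msym lo c b = 0.
Proof.
move=> hi_le cb_gt0; rewrite /msym big_permutations_nseq21 //.
by case: c {cb_gt0} => [|c]; case: b => [|b]; rewrite ?big1 ?addr0 // => t _;
  rewrite mqsym_cons_hi.
Qed.

Lemma msym0l lo b : msym lo 0 b = esym lo b.
Proof.
elim/down_ind: lo b => [lo hi_le|lo lo_lt IH] [|b]; rewrite ?msym00 //.
- by rewrite msym_hi ?esym_hi.
- by rewrite msym_step // esymS // !IH addr0.
Qed.

Definition esym_coef r s c : nat :=
  if (2 * c <= r + s)%N then 'C(r + s - 2 * c, r - c) else 0.

(* For 2c > r + s the coefficient vanishes, so the truncated subtraction in
   the second index of msym is harmless. *)
Definition msym_sum lo r s :=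
  \sum_(0 <= c < r.+1) (esym_coef r s c)%:R * msym lo c (r + s - 2 * c).

Lemma esym_coefSS r s c : esym_coef r.+1 s.+1 c.+1 = esym_coef r s c.
Proof.
rewrite /esym_coef subSS; have -> : (r.+1 + s.+1 - 2 * c.+1 = r + s - 2 * c)%N by lia.
by have -> : (2 * c.+1 <= r.+1 + s.+1)%N = (2 * c <= r + s)%N by lia.
Qed.

Lemma esym_coef_eq0 r s c : (r + s < 2 * c)%N -> esym_coef r s c = 0%N.
Proof. by move=> lt_c; rewrite /esym_coef leqNgt lt_c. Qed.

Lemma esym_coef_pascal r s c : (2 * c < r.+1 + s.+1)%N ->
  esym_coef r.+1 s.+1 c = ((c <= r) * esym_coef r s.+1 c + esym_coef r.+1 s c)%N.
Proof.
move=> c_lt; rewrite /esym_coef.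
have [-> -> ->] : [/\ 2 * c <= r.+1 + s.+1, 2 * c <= r + s.+1 & 2 * c <= r.+1 + s]%N.
  by split; lia.
have -> : (r.+1 + s.+1 - 2 * c = (r.+1 + s - 2 * c).+1)%N by lia.
have -> : (r + s.+1 - 2 * c = r.+1 + s - 2 * c)%N by lia.
case: leqP => [c_le | r_lt]; first by rewrite mul1n subSn // binS addnC.
have -> : (r.+1 - c = 0)%N by lia.
by rewrite !bin0.
Qed.

Lemma msym_sum0l lo s : msym_sum lo 0 s = esym lo s.
Proof.
by rewrite /msym_sum big_nat1 /esym_coef muln0 add0n !subn0 bin0 mul1r msym0l.
Qed.

Lemma msym_sum0r lo r : msym_sum lo r 0 = esym lo r.
Proof.
rewrite /msym_sum big_nat_recl // big1 => [|c _].
  by rewrite /esym_coef /= !addn0 !subn0 binn mul1r addr0 msym0l.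
rewrite /esym_coef; case: ifP => c_le; last by rewrite mul0r.
by rewrite bin_small ?mul0r //; lia.
Qed.

Lemma msym_sum_step lo r s : (lo < hi)%N ->
  msym_sum lo r.+1 s.+1 = msym_sum lo.+1 r.+1 s.+1
    + x lo * (msym_sum lo.+1 r s.+1 + msym_sum lo.+1 r.+1 s)
    + x lo ^+ 2 * msym_sum lo.+1 r s.
Proof.
move=> lo_lt; rewrite /msym_sum.
under eq_bigr do rewrite msym_step // !mulrDr.
rewrite !big_split /= -!addrA; congr (_ + _); rewrite addrC; congr (_ + _).
  have lin_term c :
      (esym_coef r.+1 s.+1 c)%:R *
        (if (r.+1 + s.+1 - 2 * c)%N is b.+1 then x lo * msym lo.+1 c b else 0)
    = x lo * ((c <= r)%:R * (esym_coef r s.+1 c)%:R * msym lo.+1 c (r + s.+1 - 2 * c)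
              + (esym_coef r.+1 s c)%:R * msym lo.+1 c (r.+1 + s - 2 * c)).
    case Eb: (r.+1 + s.+1 - 2 * c)%N => [|b].
      rewrite (@esym_coef_eq0 r s.+1) ?(@esym_coef_eq0 r.+1 s); try lia.
      by rewrite !mulr0 !mul0r addr0 mulr0.
    have -> : (r + s.+1 - 2 * c = b)%N by lia.
    have -> : (r.+1 + s - 2 * c = b)%N by lia.
    by rewrite mulrCA esym_coef_pascal ?natrD ?natrM ?mulrDl //; lia.
  under eq_bigr do rewrite lin_term.
  rewrite -mulr_sumr big_split /= big_nat_recr //= ltnn mul0r mul0r addr0.
  congr (_ * (_ + _)); apply: eq_big_nat => c /andP[_].
  by rewrite ltnS => ->; rewrite mul1r.
rewrite big_nat_recl //= mulr0 add0r mulr_sumr; apply: eq_bigr => c _.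
have -> : (r.+1 + s.+1 - 2 * c.+1 = r + s - 2 * c)%N by lia.
by rewrite esym_coefSS mulrCA.
Qed.

Lemma esym_mul lo r s : esym lo r * esym lo s = msym_sum lo r s.
Proof.
elim/down_ind: lo r s => [lo hi_le|lo lo_lt IH] [|r] [|s];
  rewrite ?mul1r ?mulr1 ?msym_sum0l ?msym_sum0r //.
  rewrite !esym_hi // mul0r /msym_sum big1 // => c _.
  by rewrite msym_hi ?mulr0 //; lia.
rewrite msym_sum_step // -!IH !(esymS _ lo_lt).
by ring.
Qed.

Lemma coef_prod_esym lo r :
  (\prod_(lo <= i < hi) (1 + x i *: 'X))`_r = esym lo r.
Proof.
elim/down_ind: lo r => [lo hi_le|lo lo_lt IH] r.
  by rewrite big_geq // coef1 esym_hi.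
rewrite big_ltn // mulrDl mul1r -scalerAl coefD coefZ coefXM.
case: r => [|r] /=; first by rewrite mulr0 addr0 IH.
by rewrite (esymS _ lo_lt) !IH.
Qed.

End QuasiSymmetric.

Lemma hockey_stick n r : \sum_(k < n) 'C(k, r) = 'C(n, r.+1).
Proof.
elim: n => [|n IHn]; first by rewrite big_ord0.
by rewrite big_ord_recr /= IHn binS.
Qed.

Lemma coef_Xadd1_expr (R : nzSemiRingType) k r :
  ((('X + 1) ^+ k : {poly R}))`_r = 'C(k, r)%:R.
Proof.
elim: k r => [|k IHk] [|r]; rewrite ?expr0 ?coef1 //.
all: rewrite exprS mulrDl mul1r coefD coefXM /=.
  by rewrite add0r IHk !bin0.
by rewrite !IHk binS natrD addrC.
Qed.

Lemma cos_neq1 (R : realType) (t : R) : 0 < t < pi *+ 2 -> cos t != 1.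
Proof.
move=> /andP[t_gt0 t_lt]; have half_pos : 0 < sin (t / 2).
  by apply: sin_gt0_pi; rewrite divr_gt0 //= ltr_pdivrMr // mulr_natr.
rewrite -[t](@mulfVK _ 2) ?pnatr_eq0 // mulr_natr cos_mulr2n cos2sin2.
apply/eqP; rewrite mulr2n => cos_eq1.
have /eqP : sin (t / 2) ^+ 2 = 0 by lra.
by rewrite sqrf_eq0 gt_eqF.
Qed.

Section RootsOfUnity.
Variables (R : realType) (n : nat).
Hypothesis n_gt0 : (0 < n)%N.
Local Notation z := (zeta R n).
Local Notation t := (2 * pi / n%:R : R).
Local Notation RC := (real_complex R).

Lemma zeta_expr k : z ^+ k = RC (cos (t * k%:R)) + 'i%C * RC (sin (t * k%:R)).
Proof.
elim: k => [|k IHk]; first by rewrite expr0 mulr0 cos0 sin0 mulr0 addr0.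
have -> : t * k.+1%:R = t + t * k%:R by rewrite -(natr1 k) mulrDr mulr1 addrC.
have -> : z = RC (cos t) + 'i%C * RC (sin t) by [].
rewrite exprS IHk cosD sinD !rmorphB !rmorphD !rmorphM /=.
have sqr_i : 'i%C * 'i%C = -1 :> R[i] by rewrite -expr2 sqr_i.
set a := RC (cos t); set b := RC (sin t); set c := RC (cos _); set d := RC (sin _).
transitivity (a * c + 'i%C * (a * d + b * c) + ('i%C * 'i%C) * (b * d)); first by ring.
by rewrite sqr_i; ring.
Qed.

Lemma zeta_prim : n.-primitive_root z.
Proof.
apply/andP; split => //; apply/forallP => -[i /= i_lt]; apply/eqP.
rewrite unity_rootE zeta_expr; case: (ltngtP i.+1 n) i_lt => // [i_lt _ | -> _].
  apply/negbTE; apply: contra (cos_neq1 (_ : 0 < t * i.+1%:R < pi *+ 2)).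
    by move/eqP/(congr1 (@complex.Re R)); rewrite /= mul0r mul1r subr0 addr0 => ->.
  have pi_gt0 := @pi_gt0 R; have i_ltn : (i.+1%:R : R) < n%:R by rewrite ltr_nat.
  rewrite mulr_gt0 ?divr_gt0 ?mulr_gt0 ?ltr0n //= mulrAC ltr_pdivrMr ?ltr0n //.
  by rewrite mulr2n; nra.
by rewrite mulfVK ?pnatr_eq0 -?lt0n // mulr_natl cos2pi sin2pi mulr0 addr0 !eqxx.
Qed.

Lemma one_sub_zeta_neq0 i : (0 < i < n)%N -> 1 - z ^+ i != 0.
Proof.
move=> i_bounds; rewrite subr_eq0 eq_sym -(prim_order_dvd zeta_prim).
by apply/negP => /dvdn_leq; lia.
Qed.

Lemma prod_XsubC_zeta :
  \prod_(1 <= i < n) ('X - (z ^+ i)%:P) = \sum_(k < n) 'X^k :> {poly R[i]}.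
Proof.
have := factor_Xn_sub_1 zeta_prim; rewrite big_ltn // expr0 subrX1.
by move/mulfI; apply; rewrite polyXsubC_eq0.
Qed.

Lemma prod_1_sub_zeta : \prod_(1 <= i < n) (1 - z ^+ i) = n%:R.
Proof.
have := congr1 (horner^~ 1) prod_XsubC_zeta; rewrite /= horner_prod horner_sum.
under eq_bigr do rewrite hornerXsubC.
under [in X in _ = X -> _]eq_bigr do rewrite hornerXn expr1n.
by rewrite sumr_const card_ord.
Qed.

Lemma prod_XaddC_zeta :
  \prod_(1 <= i < n) ('X + (1 - z ^+ i)%:P) = \sum_(k < n) ('X + 1) ^+ k.
Proof.
have := congr1 (comp_poly ('X + 1)) prod_XsubC_zeta; rewrite rmorph_prod rmorph_sum /=.
under [in X in _ = X -> _]eq_bigr do rewrite comp_Xn_poly.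
move=> <-; apply: eq_bigr => i _.
by rewrite comp_polyB comp_polyX comp_polyC rmorphB rmorph1 addrA.
Qed.

Lemma esym_zeta r :
  esym (fun i => (1 - z ^+ i)^-1) n 1 r = 'C(n, r.+1)%:R / n%:R.
Proof.
rewrite -coef_prod_esym.
have -> : \prod_(1 <= i < n) (1 + (1 - z ^+ i)^-1 *: 'X) =
    (\prod_(1 <= i < n) (1 - z ^+ i))^-1%:P *
    \prod_(1 <= i < n) ('X + (1 - z ^+ i)%:P).
  rewrite -prodfV rmorph_prod -big_split /=; apply: eq_big_nat => i i_bounds.
  by rewrite mulrDr mul_polyC -polyCM mulVf ?one_sub_zeta_neq0 // polyC1 addrC.
rewrite prod_XaddC_zeta prod_1_sub_zeta coefCM coef_sum.
under eq_bigr do rewrite coef_Xadd1_expr.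
by rewrite -natr_sum hockey_stick mulrC.
Qed.
End RootsOfUnity.

Lemma Zrec_mqsym (R : realType) n lo s :
  Zrec R n lo s = mqsym (fun i => (1 - zeta R n ^+ i)^-1) n lo s.
Proof.
by elim: s lo => [|a s IHs] lo //=; apply: eq_bigr => i _; rewrite IHs exprVn.
Qed.

Lemma Ycal_msym (R : realType) n c b :
  Ycal R n (nseq c 2%N ++ nseq b 1%N) = msym (fun i => (1 - zeta R n ^+ i)^-1) n 1 c b.
Proof. by apply: eq_bigr => t _; rewrite /Zfrak Zrec_mqsym. Qed.

Theorem theorem7 (R : realType) (n m l : nat)
  (hm : (0 < m)%N) (hl : (0 < l)%N) (hmn : (m <= n - 1)%N) (hln : (l <= n - 1)%N) :
  \sum_(0 <= j < n - m)
     (if (l <= m + 2 * j)%N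
      then ('C(m + 2 * j - l, j))%:R *
           Ycal R n (nseq (n - m - j - 1) 2%N ++ nseq (m + 2 * j - l) 1%N)
      else 0)
  = (('C(n, m) * 'C(n, l))%:R / (n ^ 2)%:R : R[i]).
Proof.
have n_gt0 : (0 < n)%N by lia.
transitivity (msym_sum (fun i => (1 - zeta R n ^+ i)^-1) n 1 (n - m - 1) (n - l - 1)).
  rewrite /msym_sum -(_ : n - m = (n - m - 1).+1)%N; last by lia.
  rewrite big_nat_rev; apply: eq_big_nat => c /andP[_ c_lt]; rewrite add0n.
  rewrite /esym_coef -Ycal_msym.
  have -> : (n - m - 1 - c = n - m - c.+1)%N by lia.
  have -> : (l <= m + 2 * (n - m - c.+1))%N =
            (2 * c <= n - m - 1 + (n - l - 1))%N by lia.
  have -> : (m + 2 * (n - m - c.+1) - l = n - m - 1 + (n - l - 1) - 2 * c)%N by lia.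
  have -> : (n - m - (n - m - c.+1) - 1 = c)%N by lia.
  by case: ifP; rewrite ?mul0r.
rewrite -esym_mul !esym_zeta // !subn1 !prednK ?subn_gt0 ?bin_sub; try lia.
by rewrite natrM natrX; field; rewrite pnatr_eq0 -lt0n.
Qed.
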